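(* Let $C$ be a finite acyclic category and let $F\colon C\to C$ be a functor. If $\mathrm{sd}(F)\colon\mathrm{sd}(C)\to\mathrm{sd}(C)$ fixes an element $\sigma\in\mathrm{sd}(C)$, i.e. $\mathrm{sd}(F)(\sigma)=\sigma$, then $\mathrm{sd}(F)(\tau)=\tau$ for all $\tau\le\sigma$ in $\mathrm{sd}(C)$.
   Context: An acyclic category is a small category in which only identities are invertible and the only endomorphisms are identities; finite means finitely many morphisms. The nerve $\Delta(C)$ is the regular trisp with vertices the objects of $C$ and one $k$-simplex for each chain $x_0\xrightarrow{\alpha_1}x_1\to\cdots\xrightarrow{\alpha_k}x_k$ of $k\ge1$ composable non-identity morphisms (a $0$-simplex being an object). The faces of such a simplex are the chains obtained by choosing a nonempty subset of the vertices $x_0,\dots,x_k$ (in order) and composing the morphisms between consecutive chosen vertices (e.g. deleting $x_0$, deleting $x_k$, or replacing $\alpha_j,\alpha_{j+1}$ by $\alpha_{j+1}\circ\alpha_j$). $\mathrm{sd}(C)$ is the face poset of $\Delta(C)$: its elements are the simplices, with $\tau\le\sigma$ iff $\tau$ is a face of $\sigma$. For a functor $F$, $\mathrm{sd}(F)$ sends the chain $x_0\xrightarrow{\alpha_1}\cdots\xrightarrow{\alpha_k}x_k$ to the chain $F(x_0)\xrightarrow{F(\alpha_1)}\cdots\xrightarrow{F(\alpha_k)}F(x_k)$ (the simplex of $\Delta(C)$ it determines). *)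

From HB Require Import structures.
From mathcomp Require Import all_boot.
Set Implicit Arguments. Unset Strict Implicit. Unset Printing Implicit Defensive.

Record category := Category {
  Obj : finType;
  Hom : Obj -> Obj -> finType;
  idm : forall x, Hom x x;
  comp : forall x y z, Hom y z -> Hom x y -> Hom x z;
  comp_id_r : forall x y (f : Hom x y), comp f (idm x) = f;
  comp_id_l : forall x y (f : Hom x y), comp (idm y) f = f;
  comp_assoc : forall x y z w (f : Hom x y) (g : Hom y z) (h : Hom z w),
      comp h (comp g f) = comp (comp h g) f
}.
Arguments idm {c}.
Arguments comp {c x y z}.

Section Cat.
Variable C : category.

Definition is_id (x y : Obj C) (f : Hom x y) : Prop :=
  exists e : x = y, f = eq_rect x (Hom x) (idm x) y e.

Definition invertible (x y : Obj C) (f : Hom x y) : Prop :=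
  exists g : Hom y x, comp g f = idm x /\ comp f g = idm y.

Definition acyclic : Prop :=
  (forall x y (f : Hom x y), invertible f -> is_id f) /\
  (forall (x : Obj C) (f : Hom x x), f = idm x).

Inductive chain : Obj C -> Type :=
  | ch0 (x : Obj C) : chain x
  | chS (x y : Obj C) (a : Hom x y) (c : chain y) : chain x.

Fixpoint nondeg (x : Obj C) (c : chain x) : Prop :=
  match c with
  | ch0 _ => True
  | chS _ _ a c' => ~ is_id a /\ nondeg c'
  end.

(** simplices of the nerve Delta(C) = elements of sd(C) *)
Definition simplex : Type := { x : Obj C & chain x }.
Definition is_simplex (s : simplex) : Prop := nondeg (projT2 s).

(** Faces: select a nonempty subset of the vertices via a bit mask
    (bit i for vertex x_i; missing bits are false) and compose the morphisms
    between consecutive selected vertices.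
    [selB p c m]: last selected vertex z, pending composite p : z -> y,
    remaining chain c starting at y (vertex y not yet decided). *)
Fixpoint selB (z y : Obj C) (p : Hom z y) (c : chain y) (m : seq bool)
  : chain z :=
  match c in chain y0 return Hom z y0 -> chain z with
  | ch0 y0 => fun p =>
      if head false m then chS p (ch0 y0) else ch0 z
  | chS y0 w a c' => fun p =>
      if head false m then chS p (selB a c' (behead m))
      else selB (comp a p) c' (behead m)
  end p.

(** nothing selected yet *)
Fixpoint selA (x : Obj C) (c : chain x) (m : seq bool) : option simplex :=
  match c with
  | ch0 x0 => if head false m then Some (existT _ x0 (ch0 x0)) else None
  | chS x0 w a c' =>
      if head false m then Some (existT _ x0 (selB a c' (behead m)))
      else selA c' (behead m)
  end.

(** tau <= sigma in sd(C): tau is a face of sigma *)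
Definition face (tau sigma : simplex) : Prop :=
  exists m : seq bool, selA (projT2 sigma) m = Some tau.

End Cat.

Arguments chain : clear implicits.
Arguments ch0 {C}.
Arguments chS {C x y}.

Record functor (C : category) := Functor {
  Fobj : Obj C -> Obj C;
  Fmor : forall x y, Hom x y -> Hom (Fobj x) (Fobj y);
  Fmor_id : forall x, Fmor (idm x) = idm (Fobj x);
  Fmor_comp : forall x y z (f : Hom x y) (g : Hom y z),
      Fmor (comp g f) = comp (Fmor g) (Fmor f)
}.
Arguments Fobj {C}.
Arguments Fmor {C} _ {x y}.

Section SdF.
Variables (C : category) (F : functor C).

(** prepend a to r, dropping a if it is an identity morphism (so that a chain
    containing identities is replaced by the simplex it determines) *)
Definition cons_nd (x y : Obj C) (a : Hom x y) (r : chain C y) : chain C x :=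
  match y =P x with
  | ReflectT e =>
      if eq_rect y (Hom x) a x e == idm x then eq_rect y (chain C) r x e
      else chS a r
  | ReflectF _ => chS a r
  end.

Fixpoint map_chain (x : Obj C) (c : chain C x) : chain C (Fobj F x) :=
  match c with
  | ch0 x0 => ch0 (Fobj F x0)
  | chS _ _ a c' => cons_nd (Fmor F a) (map_chain c')
  end.

Definition sdF (s : simplex C) : simplex C :=
  existT _ (Fobj F (projT1 s)) (map_chain (projT2 s)).
End SdF.

From Pilot Require Import Defs.
From mathcomp Require Import all_boot.

Set Implicit Arguments. Unset Strict Implicit. Unset Printing Implicit Defensive.

(** A simplex is determined by its first vertex and its list of arrows, each
    arrow packed with its source and target. In an acyclic category [sd(F)]
    maps this list by [F] and drops the arrows that become identities, i.e.
    those with equal source and target. If [sd(F)] fixes [sigma] nothing is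
    dropped, so [F] fixes every arrow of [sigma], and all of them have distinct
    endpoints. A face of [sigma] consists of composites of consecutive arrows
    of [sigma]; [F] fixes them by functoriality, and they still have distinct
    endpoints because two objects with arrows both ways coincide in an acyclic
    category. Hence [sd(F)] drops nothing from a face and fixes it. *)

Lemma filter_map_id (T : eqType) (f : T -> T) (p : pred T) (s : seq T) :
  filter p (map f s) = s <-> all (fun x => (f x == x) && p x) s.
Proof.
split=> [eq_s | ]; last first.
  by elim: s => //= x s IH /andP[/andP[/eqP -> ->] /IH ->].
have all_p : all p (map f s) by rewrite all_count -size_filter eq_s size_map.
have map_s : map f s = s by rewrite -{2}eq_s (all_filterP all_p).
rewrite map_s in all_p; elim: s {eq_s} map_s all_p => //= x s IH [fx /IH IHs].
by rewrite fx eqxx => /andP[-> /IHs].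
Qed.

Section Arrows.
Variable C : category.

Definition arrow := {p : (Obj C * Obj C)%type & Hom p.1 p.2}.

Definition arrow_of (x y : Obj C) (f : Hom x y) : arrow :=
  existT (fun p : (Obj C * Obj C)%type => Hom p.1 p.2) (x, y) f.

Definition proper (a : arrow) : bool := (tag a).1 != (tag a).2.

Fixpoint arrows (x : Obj C) (c : chain C x) : seq arrow :=
  if c is chS _ _ a c' then arrow_of a :: arrows c' else [::].

Lemma arrow_of_inj (x y : Obj C) : injective (@arrow_of x y).
Proof. by move=> f f'; apply: eq_from_Tagged. Qed.

Lemma arrow_of_comp (x y z x' y' z' : Obj C) (f : Hom x y) (g : Hom y z)
    (f' : Hom x' y') (g' : Hom y' z') :
  arrow_of f = arrow_of f' -> arrow_of g = arrow_of g' ->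
  arrow_of (Defs.comp g f) = arrow_of (Defs.comp g' f').
Proof.
move=> eq_f eq_g.
case: (congr1 tag eq_f) (congr1 tag eq_g) => ex ey [_ ez]; subst.
by rewrite (arrow_of_inj eq_f) (arrow_of_inj eq_g).
Qed.

Lemma arrows_eq_rect (x y : Obj C) (e : x = y) (c : chain C x) :
  arrows (eq_rect x (chain C) c y e) = arrows c.
Proof. by case: y / e. Qed.

Lemma simplex_inj (s t : simplex C) :
  tag s = tag t -> arrows (tagged s) = arrows (tagged t) -> s = t.
Proof.
case: s t => x c [x' c'] /=.
elim: c x' c' => [x0 | x0 y a c IH] x' [x1 | x1 y1 a1 c1] //= ex; first by subst.
move=> eq_list; move: (congr1 behead eq_list) => /= eq_arrows.
have /= eq_a := congr1 (head (arrow_of a)) eq_list.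
case: (congr1 tag eq_a) => _ ey; subst.
by rewrite (arrow_of_inj eq_a) (eq_from_Tagged (IH _ c1 erefl eq_arrows)).
Qed.

Section Acyclic.
Hypothesis invertible_id : forall (x y : Obj C) (f : Hom x y), invertible f -> is_id f.
Hypothesis endo_id : forall (x : Obj C) (f : Hom x x), f = idm x.

Lemma hom_antisym (x y : Obj C) (f : Hom x y) (g : Hom y x) : x = y.
Proof.
have [e _] : is_id f by apply: invertible_id; exists g; split; apply: endo_id.
exact: e.
Qed.

Lemma proper_comp (x y z : Obj C) (f : Hom x y) (g : Hom y z) :
  proper (arrow_of f) -> proper (arrow_of (Defs.comp g f)).
Proof.
by rewrite /proper /=; apply: contra => /eqP exz; subst z; rewrite (hom_antisym f g).
Qed.

Variable F : functor C.

Definition Farrow (a : arrow) : arrow := arrow_of (Fmor F (tagged a)).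

(* The arrows that [sd(F)] neither drops nor changes. *)
Definition fixed_arrow (a : arrow) : bool := (Farrow a == a) && proper a.

Lemma arrows_map_chain (x : Obj C) (c : chain C x) :
  arrows (map_chain F c) = filter proper (map Farrow (arrows c)).
Proof.
elim: c => [// | x0 y a c IH] /=.
have -> : proper (Farrow (arrow_of a)) = (Fobj F x0 != Fobj F y) by [].
rewrite /cons_nd; case: eqP => [e | ne].
  by rewrite (endo_id (eq_rect _ _ _ _ e)) eqxx arrows_eq_rect IH e eqxx.
by rewrite eq_sym (introF eqP ne) /= IH.
Qed.

Lemma fixed_arrow_comp (x y z : Obj C) (f : Hom x y) (g : Hom y z) :
  fixed_arrow (arrow_of f) -> fixed_arrow (arrow_of g) ->
  fixed_arrow (arrow_of (Defs.comp g f)).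
Proof.
rewrite /fixed_arrow => /andP[/eqP Ff proper_f] /andP[/eqP Fg _].
by rewrite proper_comp // andbT /Farrow /= Fmor_comp (arrow_of_comp Ff Fg).
Qed.

Lemma fixed_arrows_selB (y z : Obj C) (f : Hom z y) (c : chain C y) m :
  fixed_arrow (arrow_of f) -> all fixed_arrow (arrows c) ->
  all fixed_arrow (arrows (selB f c m)).
Proof.
elim: c z f m => [y0 | y0 w a c IH] z f m fixed_f /=.
  by case: ifP => //= _; rewrite fixed_f.
case/andP=> fixed_a fixed_c; case: ifP => _ /=.
  by rewrite fixed_f IH.
by rewrite IH // fixed_arrow_comp.
Qed.

Lemma fixed_arrows_face (tau sigma : simplex C) :
  face tau sigma -> Fobj F (tag sigma) = tag sigma ->
  all fixed_arrow (arrows (tagged sigma)) ->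
  Fobj F (tag tau) = tag tau /\ all fixed_arrow (arrows (tagged tau)).
Proof.
case: sigma => x c [m /=]; elim: c m => [x0 | x0 w a c IH] m /=.
  by case: ifP => // _ [<-].
case: ifP => _ => [[<-] Fx /andP[fixed_a fixed_c] | sel Fx /andP[fixed_a]].
  by split; last exact: fixed_arrows_selB.
apply: IH sel _.
by case/andP: fixed_a => /eqP/(congr1 tag) [_ ->].
Qed.

Lemma sdF_fixed_arrows (s : simplex C) :
  sdF F s = s -> Fobj F (tag s) = tag s /\ all fixed_arrow (arrows (tagged s)).
Proof.
case: s => x c Fs; split; first exact: (congr1 tag Fs).
apply/filter_map_id.
by rewrite -arrows_map_chain (congr1 (fun s : simplex C => arrows (tagged s)) Fs).
Qed.

Lemma sdF_id_of_fixed_arrows (s : simplex C) :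
  Fobj F (tag s) = tag s -> all fixed_arrow (arrows (tagged s)) -> sdF F s = s.
Proof.
by move=> Fx /filter_map_id fixed_s; apply: simplex_inj; rewrite //= arrows_map_chain.
Qed.

End Acyclic.
End Arrows.

Theorem mainTheorem2 (C : category) (F : functor C) (sigma : simplex C) :
  acyclic C -> is_simplex sigma -> sdF F sigma = sigma ->
  forall tau : simplex C, face tau sigma -> sdF F tau = tau.
Proof.
move=> [invertible_id endo_id] _ Fsigma tau face_tau.
have [Fx fixed_sigma] := sdF_fixed_arrows endo_id Fsigma.
have [Ftau fixed_tau] := fixed_arrows_face invertible_id endo_id face_tau Fx fixed_sigma.
exact: sdF_id_of_fixed_arrows.
Qed.
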